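(* Let $L$ be a finite-dimensional semisimple Leibniz algebra over $\mathbb{C}$ with a decomposition $L=(\oplus_{i=1}^m\mathfrak{g}_i)\ltimes(\oplus_{k=1}^n I_k)$, where $\mathfrak{g}_1,\dots,\mathfrak{g}_m$ are simple Lie subalgebras whose direct sum is a subalgebra complementary to $I$, and $I=\oplus_{k=1}^n I_k$ is a decomposition into simple $(\oplus_{i=1}^m\mathfrak{g}_i)$-submodules. Let $\Gamma$ be the graph with vertex set $\{\mathfrak{g}_1,\dots,\mathfrak{g}_m\}$ in which distinct $\mathfrak{g}_i,\mathfrak{g}_j$ are joined by an edge if and only if there exists $k$ with $[I_k,\mathfrak{g}_i]=I_k=[I_k,\mathfrak{g}_j]$. Let $\mathrm{B}\Gamma$ be the bipartite graph with vertex classes $\{I_1,\dots,I_n\}$ and $\{\mathfrak{g}_1,\dots,\mathfrak{g}_m\}$, where $I_k$ and $\mathfrak{g}_i$ are joined if and only if $[I_k,\mathfrak{g}_i]=I_k$. Then the following are equivalent: (i) $[I_k,\oplus_{i=1}^m\mathfrak{g}_i]=I_k$ for all $k=1,\dots,n$, and $\Gamma$ is connected; (ii) $\mathrm{B}\Gamma$ is connected.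
   Context: A Leibniz algebra is a vector space $L$ with a bilinear bracket satisfying $[[x,y],z]=[[x,z],y]+[x,[y,z]]$. The subspace $I=\mathrm{Span}\langle [x,x]\mid x\in L\rangle$ is an ideal with $[L,I]=0$, $\mathfrak{g}_L=L/I$ is a Lie algebra, and $L$ is semisimple if $\mathfrak{g}_L$ is semisimple; then $L$ has a subalgebra isomorphic to $\mathfrak{g}_L$ complementary to $I$, and $I$ is a module over it via $i.g=[i,g]$. For each $k,i$ one has $[I_k,\mathfrak{g}_i]\in\{I_k,\{0\}\}$. *)

From HB Require Import structures.
From mathcomp Require Import all_boot all_order all_algebra.
From mathcomp Require Export complex.
From mathcomp Require Export reals.

Set Implicit Arguments.
Unset Strict Implicit.
Unset Printing Implicit Defensive.

Import GRing.Theory.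
Local Open Scope ring_scope.

(* A finite-dimensional algebra is a vectType L over a field K together with
   a bracket br : L -> L -> L. *)
Section LeibnizDefs.

Variables (K : fieldType) (L : vectType K) (br : L -> L -> L).

Definition bilinear_bracket : Prop :=
  (forall (a : K) (x y z : L), br (a *: x + y) z = a *: br x z + br y z) /\
  (forall (a : K) (x y z : L), br x (a *: y + z) = a *: br x y + br x z).

Definition leibniz_identity : Prop :=
  forall x y z : L, br (br x y) z = br (br x z) y + br x (br y z).

(* [U,V] : the subspace spanned by all brackets [u,v], u in U, v in V
   (by bilinearity it is spanned by brackets of basis vectors) *)
Definition brv (U V : {vspace L}) : {vspace L} :=
  (\sum_(u <- vbasis U) \sum_(v <- vbasis V) <[br u v]>)%VS.

Definition is_square_span (J : {vspace L}) : Prop :=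
  (forall x : L, br x x \in J) /\
  (forall U : {vspace L}, (forall x : L, br x x \in U) -> (J <= U)%VS).

(* S is a simple Lie subalgebra of L: closed under the bracket, the restricted
   bracket is alternating (hence, with the Leibniz identity, a Lie bracket),
   S is non-abelian and has no ideals other than 0 and S. *)
Definition simple_Lie_subalgebra (S : {vspace L}) : Prop :=
  [/\ (brv S S <= S)%VS,
      {in S, forall x, br x x = 0},
      brv S S != 0%VS &
      forall J : {vspace L}, (J <= S)%VS -> (brv J S <= J)%VS ->
        J = 0%VS \/ J = S].

(* W is a simple submodule for the subalgebra G, under the action w.g = [w,g] *)
Definition simple_submodule (G W : {vspace L}) : Prop :=
  [/\ W != 0%VS,
      (brv W G <= W)%VS &
      forall U : {vspace L}, (U <= W)%VS -> (brv U G <= U)%VS ->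
        U = 0%VS \/ U = W].

Definition gamma_rel (m n : nat) (g : 'I_m -> {vspace L})
    (I : 'I_n -> {vspace L}) : rel 'I_m :=
  fun i j => (i != j) &&
    [exists k, (brv (I k) (g i) == I k) && (brv (I k) (g j) == I k)].

Definition bgamma_rel (m n : nat) (g : 'I_m -> {vspace L})
    (I : 'I_n -> {vspace L}) : rel ('I_n + 'I_m) :=
  fun u v => match u, v with
  | inl k, inr i => brv (I k) (g i) == I k
  | inr i, inl k => brv (I k) (g i) == I k
  | _, _ => false
  end.

End LeibnizDefs.

Definition graph_connected (T : finType) (e : rel T) : Prop :=
  forall x y : T, connect e x y.

From HB Require Import structures.
From mathcomp Require Import all_boot all_order all_algebra.
From mathcomp Require Import complex reals.

Set Implicit Arguments.
Unset Strict Implicit.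
Unset Printing Implicit Defensive.

Import GRing.Theory.
Local Open Scope ring_scope.

(* By the Leibniz identity, [I_k, g_i] is a submodule of the simple module
   I_k, hence 0 or I_k; thus [I_k, (+)g] = I_k iff I_k has a neighbour in
   B Gamma, and the equivalence becomes a statement about a bipartite graph
   and the graph of shared neighbours on one side.  The one case this misses
   is B Gamma being the single vertex I_1: then L = I, and as [L, I] = 0 all
   squares vanish, forcing I = 0. *)

Section BipartiteGraph.

Variables (A B : finType) (adj : A -> B -> bool).

Definition bipartite_rel : rel (A + B) := fun u v =>
  match u, v with
  | inl a, inr b | inr b, inl a => adj a b
  | _, _ => false
  end.

Definition common_nbr_rel : rel B :=
  fun b b' => (b != b') && [exists a, adj a b && adj a b'].

Lemma bipartite_rel_sym : symmetric bipartite_rel.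
Proof. by case=> [a|b] [a'|b']. Qed.

Lemma connect_common_nbr a b b' :
  adj a b -> adj a b' -> connect common_nbr_rel b b'.
Proof.
move=> ab ab'; have [<-|neq_bb'] := eqVneq b b'; first exact: connect0.
apply: connect1; rewrite /common_nbr_rel neq_bb'.
by apply/existsP; exists a; rewrite ab.
Qed.

Lemma connect_common_nbr_bipartite b b' :
  connect common_nbr_rel b b' -> connect bipartite_rel (inr b) (inr b').
Proof.
case/connectP=> p; elim: p b => [|b1 p IH] b /=.
  by move=> _ ->; apply: connect0.
case/andP=> /andP[_ /existsP[a /andP[ab ab1]]] path_p last_p.
apply: connect_trans (IH _ path_p last_p).
by apply: (connect_trans (y := inl a)); apply: connect1.
Qed.

Definition closed_nbr (u : A + B) (b : B) : bool :=
  if u is inl a then adj a b else u == inr b.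

Lemma bipartite_path_common_nbr p u b b' :
  path bipartite_rel u p -> closed_nbr u b -> last u p = inr b' ->
  connect common_nbr_rel b b'.
Proof.
elim: p u b => [|w p IH] [a|b0] b /=; first by [].
- by move=> _ /eqP[->] [->]; apply: connect0.
- case: w => [//|b1] /andP[ab1 path_p] ab last_p.
  apply: connect_trans (connect_common_nbr ab ab1) (IH _ _ path_p _ last_p).
  by rewrite /= eqxx.
- by case: w => [a|//] /andP[ab0 path_p] /eqP[<-]; apply: IH path_p ab0.
Qed.

Lemma bipartite_connected_common_nbr :
  graph_connected bipartite_rel -> graph_connected common_nbr_rel.
Proof.
move=> conn b b'; have /connectP[p path_p last_p] := conn (inr b) (inr b').
by apply: bipartite_path_common_nbr path_p _ (esym last_p); rewrite /= eqxx.
Qed.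

Lemma common_nbr_connected_bipartite :
  (forall a, [exists b, adj a b]) ->
  graph_connected common_nbr_rel -> graph_connected bipartite_rel.
Proof.
move=> has_nbr conn.
have to_right u : exists b, connect bipartite_rel u (inr b).
  case: u => [a|b]; last by exists b; apply: connect0.
  by have /existsP[b ab] := has_nbr a; exists b; apply: connect1.
move=> u v; have [b ub] := to_right u; have [b' vb'] := to_right v.
apply: connect_trans ub _.
apply: connect_trans (connect_common_nbr_bipartite (conn b b')) _.
by rewrite (sym_connect_sym bipartite_rel_sym).
Qed.

Lemma bipartite_connected_isolated a :
  graph_connected bipartite_rel ->
  [exists b, adj a b] \/ (forall u : A + B, u = inl a).
Proof.
move=> conn; have [/existsP|no_nbr] := boolP [exists b, adj a b]; first by left.
right=> u; have /connectP[[|[//|b] p] //= /andP[ab _] _] := conn (inl a) u.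
by case/existsP: no_nbr; exists b.
Qed.

End BipartiteGraph.

Section SubspaceBracket.

Variables (K : fieldType) (L : vectType K) (br : L -> L -> L).
Hypothesis br_bilinear : bilinear_bracket br.

Definition br_left (z : L) : {linear L -> L} :=
  HB.pack (fun x => br x z)
    (GRing.isLinear.Build K L L *:%R (fun x => br x z)
       (fun a x y => br_bilinear.1 a x y z)).

Definition br_right (x : L) : {linear L -> L} :=
  HB.pack (br x)
    (GRing.isLinear.Build K L L *:%R (br x)
       (fun a y z => br_bilinear.2 a x y z)).

Lemma brZl a x y : br (a *: x) y = a *: br x y.
Proof. exact: linearZ_LR (br_left y) a x. Qed.

Lemma brZr a x y : br x (a *: y) = a *: br x y.
Proof. exact: linearZ_LR (br_right x) a y. Qed.

Lemma br_suml (I : Type) (r : seq I) (P : pred I) (F : I -> L) y :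
  br (\sum_(i <- r | P i) F i) y = \sum_(i <- r | P i) br (F i) y.
Proof. exact: (linear_sum (br_left y) r P F). Qed.

Lemma br_sumr (I : Type) (r : seq I) (P : pred I) (F : I -> L) x :
  br x (\sum_(i <- r | P i) F i) = \sum_(i <- r | P i) br x (F i).
Proof. exact: (linear_sum (br_right x) r P F). Qed.

Lemma memv_brv (U V : {vspace L}) u v :
  u \in U -> v \in V -> br u v \in brv br U V.
Proof.
move=> /coord_vbasis-> /coord_vbasis->.
rewrite br_suml; apply: rpred_sum => i _; rewrite brZl; apply: rpredZ.
rewrite br_sumr; apply: rpred_sum => j _; rewrite brZr; apply: rpredZ.
rewrite /brv big_tuple memvE; apply: (sumv_sup i) => //.
rewrite big_tuple; apply: (sumv_sup j) => //.
by rewrite !(tnth_nth 0) -memvE memv_line.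
Qed.

Lemma brv_subP (U V W : {vspace L}) :
  reflect (forall u v, u \in U -> v \in V -> br u v \in W)
          (brv br U V <= W)%VS.
Proof.
apply: (iffP idP) => [sUVW u v Uu Vv | brUVW].
  exact: subvP sUVW _ (memv_brv Uu Vv).
rewrite /brv big_seq; elim/big_rec: _ => [|b X Ub sX]; rewrite ?sub0v //.
rewrite subv_add sX andbT big_seq.
elim/big_rec: _ => [|c Y Vc sY]; rewrite ?sub0v // subv_add sY andbT.
by rewrite -memvE brUVW ?vbasis_mem.
Qed.

Lemma brvS (U U' V V' : {vspace L}) :
  (U <= U')%VS -> (V <= V')%VS -> (brv br U V <= brv br U' V')%VS.
Proof.
move=> sUU' sVV'; apply/brv_subP => u v Uu Vv.
by apply: memv_brv; [apply: subvP sUU' _ Uu | apply: subvP sVV' _ Vv].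
Qed.

Lemma brv_sumr (I : finType) (U : {vspace L}) (V : I -> {vspace L}) :
  (brv br U (\sum_i V i) <= \sum_i brv br U (V i))%VS.
Proof.
apply/brv_subP => u _ Uu /memv_sumP[v Vv ->]; rewrite br_sumr.
by apply: memv_sumr => i _; apply: memv_brv (Vv i _).
Qed.

End SubspaceBracket.

Section LeibnizModules.

Variables (K : fieldType) (L : vectType K) (br : L -> L -> L).
Hypothesis br_bilinear : bilinear_bracket br.
Hypothesis br_leibniz : leibniz_identity br.

Lemma brv_module (W S G : {vspace L}) :
  (brv br W G <= W)%VS -> (brv br S G <= S)%VS ->
  (brv br (brv br W S) G <= brv br W S)%VS.
Proof.
move=> WG SG; apply/(brv_subP br_bilinear) => z y WSz Gy.
pose right_mul_y := linfun (br_left br_bilinear y).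
suff : (brv br W S <= right_mul_y @^-1: brv br W S)%VS.
  by move/subvP/(_ z WSz); rewrite -memv_preim lfunE.
apply/(brv_subP br_bilinear) => w s Ww Ss.
rewrite -memv_preim lfunE /= br_leibniz.
apply: memvD; apply: (memv_brv br_bilinear) => //.
  exact: subvP WG _ (memv_brv br_bilinear Ww Gy).
exact: subvP SG _ (memv_brv br_bilinear Ss Gy).
Qed.

Lemma brv_factor_sum (I : finType) (g : I -> {vspace L}) i :
  (forall j, brv br (g j) (g j) <= g j)%VS ->
  (forall j k, j != k -> brv br (g j) (g k) = 0%VS) ->
  (brv br (g i) (\sum_j g j) <= g i)%VS.
Proof.
move=> closed_g orth_g; apply: subv_trans (brv_sumr br_bilinear _ _) _.
apply/subv_sumP => j _; have [<-|neq_ij] := eqVneq i j; first exact: closed_g.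
by rewrite orth_g ?sub0v.
Qed.

Lemma simple_submodule_brv (G W S : {vspace L}) :
  simple_submodule br G W -> (S <= G)%VS -> (brv br S G <= S)%VS ->
  brv br W S = 0%VS \/ brv br W S = W.
Proof.
case=> _ WG simple_W SG SGS; apply: simple_W; last exact: brv_module.
exact: subv_trans (brvS br_bilinear (subvv W) SG) WG.
Qed.

Lemma simple_submodule_brv_sum (I : finType) (g : I -> {vspace L}) W :
  simple_submodule br (\sum_i g i)%VS W ->
  (forall i, brv br (g i) (\sum_j g j) <= g i)%VS ->
  (brv br W (\sum_i g i)%VS == W) = [exists i, brv br W (g i) == W].
Proof.
move=> simple_W ideal_g; have [W0 WG _] := simple_W.
apply/idP/idP => [/eqP WGW | /existsP[i /eqP WgW]].
  apply: contraLR W0 => /existsPn no_i; rewrite negbK -subv0 -{1}WGW.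
  apply: subv_trans (brv_sumr br_bilinear _ _) _; apply/subv_sumP => i _.
  have giG := sumv_sup i isT (subvv (g i)).
  have [->|WgW] := simple_submodule_brv simple_W giG (ideal_g i).
    exact: sub0v.
  by have := no_i i; rewrite WgW eqxx.
rewrite eqEsubv WG /= -{1}WgW.
exact: (brvS br_bilinear (subvv W) (sumv_sup i isT (subvv (g i)))).
Qed.

Lemma square_span_annihilated (J : {vspace L}) x j :
  is_square_span br J -> j \in J -> br x j = 0.
Proof.
case=> _ J_min Jj.
have : (J <= lker (linfun (br_right br_bilinear x)))%VS.
  apply: J_min => y; rewrite memv_ker lfunE /=; apply/eqP.
  by apply: (addrI (br (br x y) y)); rewrite addr0 -br_leibniz.
by move/subvP/(_ j Jj); rewrite memv_ker lfunE => /eqP.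
Qed.

Lemma square_span_full_eq0 (J : {vspace L}) :
  is_square_span br J -> J = fullv -> J = 0%VS.
Proof.
move=> sqJ Jfull; have [_ J_min] := sqJ; apply/eqP; rewrite -subv0.
apply: J_min => x.
by rewrite (square_span_annihilated _ sqJ) ?mem0v // Jfull memvf.
Qed.

End LeibnizModules.

Theorem corollary3p6 (R : realType) (L : vectType R[i]) (br : L -> L -> L)
    (m n : nat) (g : 'I_m -> {vspace L}) (I : 'I_n -> {vspace L}) :
  bilinear_bracket br ->
  leibniz_identity br ->
  (forall i, simple_Lie_subalgebra br (g i)) ->
  (forall i j, i != j -> brv br (g i) (g j) = 0%VS) ->
  directv (\sum_i g i) ->
  directv (\sum_k I k) ->
  is_square_span br (\sum_k I k)%VS ->
  ((\sum_i g i) :&: (\sum_k I k))%VS = 0%VS ->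
  ((\sum_i g i) + (\sum_k I k))%VS = fullv ->
  (forall k, simple_submodule br (\sum_i g i)%VS (I k)) ->
  ((forall k, brv br (I k) (\sum_i g i)%VS = I k) /\
     graph_connected (gamma_rel br g I))
  <-> graph_connected (bgamma_rel br g I).
Proof.
move=> bil leib simple_g orth_g _ _ sqI _ full simple_I.
pose adj k i := brv br (I k) (g i) == I k.
have brIG k : (brv br (I k) (\sum_i g i)%VS == I k) = [exists i, adj k i].
  apply: simple_submodule_brv_sum => // i.
  by apply: brv_factor_sum => // j; have [] := simple_g j.
change (gamma_rel br g I) with (common_nbr_rel adj).
change (bgamma_rel br g I) with (bipartite_rel adj).
split=> [[brIG_eq conn] | conn].
  by apply: common_nbr_connected_bipartite conn => k; rewrite -brIG brIG_eq.
split=> [k|]; last exact: bipartite_connected_common_nbr.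
apply/eqP; rewrite brIG.
have [//|isolated] := bipartite_connected_isolated k conn.
have G0 : (\sum_i g i)%VS = 0%VS.
  by rewrite big1 // => i; have := isolated (inr i).
have I_sum : (\sum_k I k)%VS = I k.
  rewrite (bigD1 k) //= big1 ?addv0 // => k' neq_k'k.
  by have [/eqP] := isolated (inl k'); rewrite (negbTE neq_k'k).
have [Ik0 _ _] := simple_I k; move: Ik0.
by rewrite -I_sum (square_span_full_eq0 bil leib sqI) ?eqxx // -full G0 add0v.
Qed.
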